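(* Let $f\ge 1$ and $k\ge 2$ be integers, let there be $n=kf+1$ validators, each maintaining a local DAG as described in the context (DAG-Rider setting). Let $p_i$ be a correct validator that completes wave $w$, i.e. $DAG_i[\mathit{round}(w,4)]$ contains at least $(k-1)f+1$ vertices. Then there exist $V\subseteq DAG_i[\mathit{round}(w,1)]$ and $U\subseteq DAG_i[\mathit{round}(w,4)]$ with $|V|\ge (k-1)f+1$ and $|U|\ge (k-1)f+1$ such that for every $v\in V$ and every $u\in U$ there is a path from $u$ to $v$.
   Context: Setting: $n=kf+1$ validators $p_1,\dots,p_n$, of which at most $f$ are Byzantine and the rest are correct (honest). All validators' local DAGs are subsets of one common set of vertices. Each vertex has a round number $r\ge 1$ and a source validator; for each validator and each round there is at most one vertex (no equivocation), so any two local DAGs that contain the vertex of a given validator for a given round contain the identical vertex, with identical edges. Every vertex of round $r\ge 2$ has edges to exactly $(k-1)f+1$ vertices of round $r-1$, all with distinct sources. Each validator $p_i$ has a local DAG $DAG_i$, a set of vertices closed under edges (if $u\in DAG_i$ then every vertex $u$ has an edge to is in $DAG_i$). $DAG_i[r]$ denotes the set of round-$r$ vertices of $DAG_i$. $\mathit{path}(u,v)$ (''a path from $u$ to $v$'') means there is a sequence of contiguous edges leading from $u$ to $v$. Rounds are grouped into waves of 4 rounds: $\mathit{round}(w,j)=4(w-1)+j$ for $j=1,2,3,4$ and waves $w\ge 1$. A validator completes wave $w$ once its local DAG contains at least $(k-1)f+1$ vertices of $\mathit{round}(w,4)$. *)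

From mathcomp Require Import all_boot.
Set Implicit Arguments. Unset Strict Implicit. Unset Printing Implicit Defensive.

(* A vertex is identified by (round, source); by non-equivocation there is at
   most one vertex per (round, source), so this pair identifies it uniquely. *)
Definition vertex (n : nat) : Type := (nat * 'I_n)%type.

Definition round (w j : nat) : nat := 4 * (w - 1) + j.

Inductive dag_path {T : Type} (edge : T -> T -> bool) : T -> T -> Prop :=
| path_edge u v : edge u v -> dag_path edge u v
| path_cons u w v : edge u w -> dag_path edge w v -> dag_path edge u v.

Definition layer (n : nat) (D : pred (vertex n)) (r : nat) : {set 'I_n} :=
  [set j | D (r, j)].

(* Every round-4 vertex of DAG_i has q = (k-1)f+1 parents in round 3, each of
   which has q parents in round 2, and q > n/2.  Double counting the edges from
   the round-3 vertices X of DAG_i down to round 2 gives |X| q edges; if no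
   round-2 vertex were a grandparent of every round-4 vertex of DAG_i, each
   round-2 vertex would miss the q parents of some round-4 vertex and so have
   at most |X| - q children in X, whence |X| q <= n (|X| - q); as q <= |X| <= n
   this forces 2q <= n, contradicting q > n/2.  A common grandparent y yields V = the q parents of y and
   U = the whole round-4 layer, joined by paths of length 3 through y. *)
From mathcomp Require Import all_boot zify.

Lemma sum_card_preimset (S T : finType) (X : {set S}) (P : S -> {set T}) :
  \sum_y #|[set x in X | y \in P x]| = \sum_(x in X) #|P x|.
Proof.
transitivity (\sum_y \sum_(x in X) (y \in P x : nat)).
  apply: eq_bigr => y _; rewrite -sum1dep_card big_mkcond [RHS]big_mkcond.
  by apply: eq_bigr => x _; case: (x \in X); case: (y \in P x).
rewrite exchange_big /=; apply: eq_bigr => x _.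
by rewrite -sum1_card [RHS]big_mkcond; apply: eq_bigr => y _; case: (y \in P x).
Qed.

Lemma exists_common_grandparent (T I : finType) (q : nat) (U : {set I})
    (A : I -> {set T}) (P : T -> {set T}) :
  #|T| < 2 * q -> U != set0 ->
  {in U, forall u, q <= #|A u|} ->
  {in U, forall u, {in A u, forall x, q <= #|P x|}} ->
  exists y, {in U, forall u, exists2 x, x \in A u & y \in P x}.
Proof.
move=> majority /set0Pn [u0 u0U] card_A card_P.
set good := fun y => [forall u in U, exists x in A u, y \in P x].
have [/existsP [y /forall_inP good_y] | no_good] := boolP [exists y, good y].
  by exists y => u /good_y /exists_inP [x]; exists x.
exfalso; set X := \bigcup_(u in U) A u.
have sub_AX u : u \in U -> A u \subset X by move=> uU; apply: bigcup_sup.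
have few_children y : #|[set x in X | y \in P x]| <= #|X| - q.
  move/existsPn/(_ y): no_good; rewrite negb_forall_in => /exists_inP [u uU].
  rewrite negb_exists_in => /forall_inP miss.
  apply: (@leq_trans #|X :\: A u|); last by rewrite cardsDS ?sub_AX // leq_sub2l ?card_A.
  apply/subset_leq_card/subsetP => x; rewrite !inE => /andP [-> yPx].
  by rewrite andbT; apply: contraT; rewrite negbK => /miss; rewrite yPx.
have many_edges : #|X| * q <= \sum_y #|[set x in X | y \in P x]|.
  rewrite sum_card_preimset -sum_nat_const; apply: leq_sum => x /bigcupP [u uU].
  exact: card_P.
have qX : q <= #|X| by apply: leq_trans (card_A _ u0U) (subset_leq_card (sub_AX _ u0U)).
have XT : #|X| <= #|T| := max_card _.
have := leq_trans many_edges (leq_sum _ (fun y _ => few_children y)).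
rewrite sum_nat_const; move: majority qX XT; set m := #|X|; set N := #|T|.
by nia.
Qed.

Definition parents {n : nat} (edge : rel (vertex n)) (r : nat) (j : 'I_n) : {set 'I_n} :=
  [set j' | edge (r, j) (r.-1, j')].

Lemma parents_subset_layer (n : nat) (edge : rel (vertex n)) (D : pred (vertex n)) r j :
  (forall u v, D u -> edge u v -> D v) ->
  D (r, j) -> parents edge r j \subset layer D r.-1.
Proof. by move=> D_closed Drj; apply/subsetP => j'; rewrite !inE; apply: D_closed. Qed.

Lemma round_predS (w j : nat) : (round w j.+1).-1 = round w j.
Proof. by rewrite /round addnS. Qed.

Theorem lemma2
  (f k : nat) (hf : 1 <= f) (hk : 2 <= k)
  (* common set of vertices and the edges of those vertices *)
  (G : pred (vertex (k * f + 1)))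
  (edge : vertex (k * f + 1) -> vertex (k * f + 1) -> bool)
  (* Byzantine validators: at most f *)
  (byz : {set 'I_(k * f + 1)}) (hbyz : #|byz| <= f)
  (* local DAGs *)
  (DAG : 'I_(k * f + 1) -> pred (vertex (k * f + 1)))
  (hround : forall v, G v -> 1 <= v.1)
  (hedgeG : forall u v, edge u v -> G u /\ G v)
  (hstrong : forall r j, 2 <= r -> G (r, j) ->
      #|[set j' | edge (r, j) (r.-1, j')]| = (k - 1) * f + 1)
  (hsub : forall i v, DAG i v -> G v)
  (hclosed : forall i u v, DAG i u -> edge u v -> DAG i v)
  (i : 'I_(k * f + 1)) (hi : i \notin byz)
  (w : nat) (hw : 1 <= w)
  (hcomplete : (k - 1) * f + 1 <= #|layer (DAG i) (round w 4)|) :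
  exists (V U : {set 'I_(k * f + 1)}),
    [/\ V \subset layer (DAG i) (round w 1),
        U \subset layer (DAG i) (round w 4),
        (k - 1) * f + 1 <= #|V|,
        (k - 1) * f + 1 <= #|U| &
        forall v u, v \in V -> u \in U ->
          dag_path edge (round w 4, u) (round w 1, v)].
Proof.
set q := (k - 1) * f + 1; pose L := layer (DAG i).
have card_parents r j : 2 <= r -> j \in L r -> #|parents edge r j| = q.
  by move=> r2; rewrite inE => /hsub; apply: hstrong.
have parents_layer r j : j \in L (round w r.+1) ->
    parents edge (round w r.+1) j \subset L (round w r).
  by rewrite inE -[round w r]round_predS; apply/parents_subset_layer/hclosed.
have parent_edge r j x : x \in parents edge (round w r.+1) j ->
    edge (round w r.+1, j) (round w r, x).
  by rewrite inE round_predS.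
have [u0 u0L4] : exists u0, u0 \in L (round w 4).
  by apply/set0Pn; rewrite -card_gt0; apply: leq_trans (leq_addl _ _) hcomplete.
have [y common] : exists y, {in L (round w 4), forall u,
    exists2 x, x \in parents edge (round w 4) u & y \in parents edge (round w 3) x}.
  apply: (@exists_common_grandparent _ _ q) => [||u uL4|u uL4 x xP].
  - by rewrite card_ord /q; nia.
  - by apply/set0Pn; exists u0.
  - by rewrite card_parents // /round; lia.
  - by rewrite card_parents ?(subsetP (parents_layer _ _ uL4)) // /round; lia.
have yL2 : y \in L (round w 2).
  have [x0 /(subsetP (parents_layer _ _ u0L4)) x0L3] := common u0 u0L4.
  exact: subsetP (parents_layer _ _ x0L3) y.
exists (parents edge (round w 2) y), (L (round w 4)); split => //.
- exact: parents_layer.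
- by rewrite card_parents // /round; lia.
move=> v u /parent_edge yv /common [x /parent_edge ux /parent_edge xy].
exact: path_cons ux (path_cons xy (path_edge yv)).
Qed.
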